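(* Let $C$ be an $(n,k)$-code and $0\le d\le k$. Then $C$ is $\operatorname{rMDS}_d(2)$ if and only if $C^\perp$ is $\operatorname{rMDS}^d(2)$.
   Context: For a $k'\times n$ matrix $V$ and $A_1,\dots,A_\ell\subseteq[n]$, $\mathcal G_{A_1,\dots,A_\ell}[V]$ is the $\ell k'\times(k'+\sum|A_i|)$ block matrix whose $i$-th block row has $I_{k'}$ in the first block column and $V|_{A_i}$ (columns of $V$ in $A_i$) in block column $i+1$. A generic matrix has independent indeterminate entries. An $(n,k')$-code with generator matrix $V$ is $\operatorname{rMDS}_d(\ell)$ ($0\le d\le k'$) if $\mathcal G_{A_1,\dots,A_\ell}[V]$ has full column rank whenever $\mathcal G_{A_1,\dots,A_\ell}[W]$ does, for $W$ a generic $(k'-d)\times n$ matrix. Sets are $V$-saturated if $\operatorname{rank}\mathcal G_{A_1,\dots,A_\ell}[V]=\ell k'$, and have the $m$-dimensional saturation property if they are $W$-saturated for a generic $m\times n$ $W$. An $(n,k')$-code with generator matrix $V$ is $\operatorname{rMDS}^d(\ell)$ ($0\le d\le n-k'$) if every family with the $(k'+d)$-dimensional saturation property is $V$-saturated. *)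

From HB Require Import structures.
From mathcomp Require Import all_boot all_order all_algebra.
From mathcomp Require Import mpoly fraction.
Set Implicit Arguments. Unset Strict Implicit. Unset Printing Implicit Defensive.
Import GRing.Theory.
Local Open Scope ring_scope.

Definition colrestr (R : Type) (k' n : nat) (V : 'M[R]_(k', n)) (A : {set 'I_n})
  : 'M[R]_(k', #|A|) := colsub (fun j : 'I_#|A| => enum_val j) V.

(* G_{A_1,...,A_l}[V]: block row i is  [ I_k' | 0 ... V|_{A_i} ... 0 ],
   i.e. G = [ col of l copies of I_k' | block-diagonal (V|_{A_i})_i ]. *)
Definition Gmx (R : pzRingType) (k' n l : nat) (A : 'I_l -> {set 'I_n})
  (V : 'M[R]_(k', n)) :=
  row_mx (\mxcol_(i < l) (1%:M : 'M[R]_k'))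
         (\mxblock_(i < l, j < l)
             (if i == j then colrestr V (A j) else 0 : 'M[R]_(k', #|A j|))).

Definition full_col_rank (R : fieldType) (k' n l : nat) (A : 'I_l -> {set 'I_n})
  (V : 'M[R]_(k', n)) : Prop :=
  \rank (Gmx A V) = (k' + \sum_(i < l) #|A i|)%N.

Definition saturated (R : fieldType) (k' n l : nat) (A : 'I_l -> {set 'I_n})
  (V : 'M[R]_(k', n)) : Prop :=
  \rank (Gmx A V) = (l * k')%N.

Definition genfield (F : fieldType) (m n : nat) := {fraction {mpoly F[m * n]}}.

Definition generic_mx (F : fieldType) (m n : nat) : 'M[genfield F m n]_(m, n) :=
  \matrix_(i < m, j < n) (@FracField.tofrac _ ('X_(mxvec_index i j) : {mpoly F[m * n]})).

Definition rMDS_sub (F : fieldType) (k' n : nat) (d l : nat) (V : 'M[F]_(k', n))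
  : Prop :=
  forall A : 'I_l -> {set 'I_n},
    full_col_rank A (generic_mx F (k' - d) n) -> full_col_rank A V.

Definition rMDS_sup (F : fieldType) (k' n : nat) (d l : nat) (V : 'M[F]_(k', n))
  : Prop :=
  forall A : 'I_l -> {set 'I_n},
    saturated A (generic_mx F (k' + d) n) -> saturated A V.

(* For two sets everything reduces to ranks of column restrictions.  The pair
   (A1, A2) is W-saturated iff W restricted to A1 :|: A2 has full row rank, and
   G_{A1,A2}[W] has full column rank iff the columns of W indexed by A1 and by A2,
   taken together, are independent.  For a generic W with m rows, the restriction
   to T has rank min(m, |T|), so the generic conditions become |A1 :|: A2| >= m
   for saturation and "A1, A2 disjoint with |A1| + |A2| <= m" for full column rank.
   Hence rMDS_d(2) for C says that the columns of V on any set of size <= k - d are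
   independent, and rMDS^d(2) for the dual says that H restricted to any set of
   size >= n - k + d has full row rank.  The two statements are exchanged by
   duality: a kernel vector of V supported on T is a dual codeword vanishing on
   the complement of T. *)

From HB Require Import structures.
From mathcomp Require Import all_boot all_order all_algebra.
From mathcomp Require Import mpoly fraction zify.
Set Implicit Arguments. Unset Strict Implicit. Unset Printing Implicit Defensive.
Import GRing.Theory.
Local Open Scope ring_scope.

Section ColumnRestriction.
Variables (R : pzRingType) (n : nat).
Implicit Types (A B T : {set 'I_n}) (y : 'rV[R]_n).

Lemma colrestr_mulmx m p (M : 'M[R]_(m, p)) (N : 'M_(p, n)) A :
  colrestr (M *m N) A = M *m colrestr N A.
Proof. by rewrite /colrestr mulmx_colsub. Qed.

Lemma colrestr1 m (M : 'M[R]_(m, n)) A : colrestr M A = M *m colrestr 1%:M A.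
Proof. by rewrite -colrestr_mulmx mulmx1. Qed.

Lemma colrestr_eq0 y A : colrestr y A = 0 <-> {in A, forall j, y 0 j = 0}.
Proof.
split=> [/matrixP y0 j jA | y0].
  by have := y0 0 (enum_rank_in jA j); rewrite !mxE enum_rankK_in.
by apply/matrixP => i l; rewrite !mxE [i]ord1 y0 ?enum_valP.
Qed.

Lemma colrestrU_eq0 y A B :
  colrestr y (A :|: B) = 0 <-> colrestr y A = 0 /\ colrestr y B = 0.
Proof.
rewrite !colrestr_eq0; split=> [yAB | [yA yB] j].
  by split=> j jA; apply: yAB; rewrite inE jA ?orbT.
by rewrite inE => /orP[/yA | /yB].
Qed.

Lemma tr_colrestr1_mul A B :
  (colrestr 1%:M A)^T *m colrestr (1%:M : 'M[R]_n) B =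
  \matrix_(i, j) (enum_val i == enum_val j)%:R.
Proof.
rewrite /colrestr trmx_mxsub trmx1 -mxsub_mul mulmx1.
by apply/matrixP => i j; rewrite !mxE.
Qed.

Lemma tr_colrestr1_mul_id A :
  (colrestr 1%:M A)^T *m colrestr (1%:M : 'M[R]_n) A = 1%:M.
Proof.
by apply/matrixP => i j; rewrite tr_colrestr1_mul !mxE (inj_eq enum_val_inj).
Qed.

Lemma tr_colrestr1_mul_disjoint A B : [disjoint A & B] ->
  (colrestr 1%:M A)^T *m colrestr (1%:M : 'M[R]_n) B = 0.
Proof.
move=> dAB; apply/matrixP => i j.
rewrite tr_colrestr1_mul !mxE; case: eqP => // eij.
by have := disjointFr dAB (enum_valP i); rewrite eij enum_valP.
Qed.

Lemma colrestr_supported y T :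
  colrestr y (~: T) = 0 -> y = colrestr y T *m (colrestr 1%:M T)^T.
Proof.
move/colrestr_eq0 => yT; apply/matrixP => i j; rewrite [i]ord1 !mxE.
under eq_bigr do rewrite !mxE.
rewrite -(big_enum_val (fun l => y 0 l * (j == l)%:R)).
have [jT | jNT] := boolP (j \in T).
  rewrite (bigD1 j) //= eqxx mulr1 big1 ?addr0 // => l /andP[_ lj].
  by rewrite eq_sym (negbTE lj) mulr0.
rewrite yT ?inE // big1 // => l lT.
by case: eqP => [jl | _]; [move: jNT; rewrite jl lT | rewrite mulr0].
Qed.

End ColumnRestriction.

Lemma mxrow_eq0 (V : nmodType) q (q_ : 'I_q -> nat) m
    (B : forall j, 'M[V]_(m, q_ j)) :
  \mxrow_j B j = 0 <-> forall j, B j = 0.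
Proof. by rewrite -(mxrow0 m) -eq_mxrowP. Qed.

Lemma mxcol_eq0 (V : nmodType) p (p_ : 'I_p -> nat) m
    (B : forall i, 'M[V]_(p_ i, m)) :
  \mxcol_i B i = 0 <-> forall i, B i = 0.
Proof. by rewrite -(mxcol0 m) -eq_mxcolP. Qed.

Section GmxKernel.
Variables (R : pzRingType) (k n l : nat).
Variables (A : 'I_l -> {set 'I_n}) (M : 'M[R]_(k, n)).

Lemma mul_mxrow_Gmx (xs : 'I_l -> 'rV[R]_k) :
  (\mxrow_i xs i) *m Gmx A M =
  row_mx (\sum_i xs i) (\mxrow_j (xs j *m colrestr M (A j))).
Proof.
rewrite /Gmx mul_mx_row mul_mxrow_mxcol mul_mxrow_mxblock.
congr row_mx; first by apply: eq_bigr => i _; rewrite mulmx1.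
apply/eq_mxrowP => j; rewrite (bigD1 j) //= eqxx big1 ?addr0 // => i /negbTE ->.
exact: mulmx0.
Qed.

Lemma mul_Gmx_col_mx (w : 'cV[R]_k) (us : forall j : 'I_l, 'cV[R]_#|A j|) :
  Gmx A M *m col_mx w (\mxcol_j us j) = \mxcol_i (w + colrestr M (A i) *m us i).
Proof.
rewrite /Gmx mul_row_col mxcol_mul mul_mxblock_mxrow -mxcolD.
apply/eq_mxcolP => i; rewrite mul1mx (bigD1 i) //= eqxx big1 ?addr0 // => j.
by rewrite eq_sym => /negbTE ->; rewrite mul0mx.
Qed.

End GmxKernel.

Lemma inj_row_full (F : fieldType) m p (B : 'M[F]_(m, p)) :
  (forall v : 'cV_p, B *m v = 0 -> v = 0) -> row_full B.
Proof.
move=> injB; rewrite /row_full -mxrank_tr; apply/inj_row_free => v vB0.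
apply: trmx_inj; rewrite trmx0; apply: injB.
by rewrite -(trmxK (B *m v^T)) trmx_mul trmxK vB0 trmx0.
Qed.

Lemma ord2P (i : 'I_2) : i = ord0 \/ i = ord_max.
Proof. by case: i => [[|[|//]] ?]; [left | right]; apply: val_inj. Qed.

Lemma big_ord2 (R : Type) (idx : R) (op : Monoid.law idx) (F : 'I_2 -> R) :
  \big[op/idx]_(i < 2) F i = op (F ord0) (F ord_max).
Proof. by rewrite big_ord_recr big_ord1; congr (op (F _) _); apply: val_inj. Qed.

Lemma signed_eq0 (V : zmodType) (b : bool) (x : V) : (if b then x else - x) = 0 -> x = 0.
Proof. by case: b => // /eqP; rewrite oppr_eq0 => /eqP. Qed.

Definition fam2 n (A B : {set 'I_n}) (i : 'I_2) : {set 'I_n} :=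
  if i == ord0 then A else B.

Section FamiliesOfTwo.
Variables (F : fieldType) (k n : nat) (M : 'M[F]_(k, n)).
Implicit Types (A : 'I_2 -> {set 'I_n}) (T : {set 'I_n}).

Lemma saturated2P A :
  saturated A M <-> row_free (colrestr M (A ord0 :|: A ord_max)).
Proof.
have -> : saturated A M <-> row_free (Gmx A M).
  have sum_k : (\sum_(i < 2) k)%N = (2 * k)%N by rewrite sum_nat_const card_ord.
  by rewrite /saturated /row_free -sum_k; split=> [->|/eqP].
split=> [freeG | freeU].
  apply/inj_row_free => x; rewrite -colrestr_mulmx colrestrU_eq0 !colrestr_mulmx.
  move=> [xA0 xA1]; pose xs (i : 'I_2) := if i == ord0 then x else - x.
  have /(row_free_inj freeG) : \mxrow_i xs i *m Gmx A M = 0 *m Gmx A M.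
    rewrite mul0mx mul_mxrow_Gmx [X in row_mx X _]big_ord2 /= subrr.
    rewrite (proj2 (mxrow_eq0 _)) ?row_mx0 // => j.
    by case: (ord2P j) => -> /=; rewrite ?mulNmx ?xA0 ?xA1 ?oppr0.
  by move/mxrow_eq0/(_ ord0).
apply/inj_row_free => X; rewrite -[X]submxrowK mul_mxrow_Gmx.
set xs := submxrow X; move/eqP; rewrite row_mx_eq0 [X in X == 0]big_ord2 /=.
move=> /andP[/eqP sum0 /eqP /mxrow_eq0 xsA].
have xs1 : xs ord_max = - xs ord0 by apply/eqP; rewrite -addr_eq0 addrC sum0.
have xs0 : xs ord0 = 0.
  apply: (row_free_inj freeU); rewrite mul0mx -colrestr_mulmx colrestrU_eq0.
  rewrite !colrestr_mulmx xsA; split=> //.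
  by apply/eqP; rewrite -oppr_eq0 -mulNmx -xs1 xsA.
by apply/mxrow_eq0 => j; case: (ord2P j) => ->; rewrite ?xs1 xs0 ?oppr0.
Qed.

Lemma full_col_rank2P A :
  full_col_rank A M <-> row_full (\mxrow_j colrestr M (A j)).
Proof.
have -> : full_col_rank A M <-> row_full (Gmx A M).
  by rewrite /full_col_rank /row_full; split=> [->|/eqP].
split=> [fullG | fullU].
  apply/inj_row_full => v; rewrite -[v]submxcolK mul_mxrow_mxcol big_ord2.
  set u := submxcol v => sum0.
  pose us j := if j == ord0 then u j else - u j.
  have /(row_full_inj fullG) :
      Gmx A M *m col_mx (- (colrestr M (A ord0) *m u ord0)) (\mxcol_j us j) = Gmx A M *m 0.
    rewrite mulmx0 mul_Gmx_col_mx; apply/mxcol_eq0 => i.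
    case: (ord2P i) => -> /=; first by rewrite addNr.
    by rewrite mulmxN -opprD sum0 oppr0.
  move/eqP; rewrite col_mx_eq0 => /andP[_ /eqP /mxcol_eq0 us0].
  by apply/mxcol_eq0 => j; apply: signed_eq0 (us0 j).
apply/inj_row_full => v; rewrite -[v]vsubmxK -[dsubmx v]submxcolK mul_Gmx_col_mx.
set w := usubmx v; set u := submxcol _ => /mxcol_eq0 ker.
pose us j := if j == ord0 then u j else - u j.
have /(row_full_inj fullU) :
    \mxrow_j colrestr M (A j) *m \mxcol_j us j = \mxrow_j colrestr M (A j) *m 0.
  have Mu i : colrestr M (A i) *m u i = - w by apply/eqP; rewrite -addr_eq0 addrC ker.
  by rewrite mulmx0 mul_mxrow_mxcol big_ord2 /= mulmxN !Mu subrr.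
move/mxcol_eq0 => us0; have u0 j : u j = 0 := signed_eq0 (us0 j).
have w0 : w = 0 by rewrite -(ker ord0) u0 mulmx0 addr0.
by rewrite w0 (proj2 (mxcol_eq0 _) u0) col_mx0.
Qed.

Lemma full_col_rank_set0 T :
  full_col_rank (fam2 T set0) M <-> row_full (colrestr M T).
Proof.
rewrite full_col_rank2P /row_full -mxrank_tr tr_mxrow eqmx_col !big_ord2 /fam2 /=.
have -> : colrestr M set0 = 0 by apply/matrixP => i j; have := enum_valP j; rewrite inE.
by rewrite trmx0 genmx0 addsmx0 genmxE mxrank_tr cards0 addn0.
Qed.

Lemma full_col_rank2_disjoint A :
  full_col_rank A M -> [disjoint A ord0 & A ord_max].
Proof.
move/full_col_rank2P => fullM; rewrite disjoints_subset; apply/subsetP => j jA0.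
rewrite inE; apply/negP => jA1.
pose e : 'rV[F]_n := delta_mx 0 j.
have eE i : j \in A i -> e^T = colrestr 1%:M (A i) *m (colrestr e (A i))^T.
  move=> jA; rewrite [in LHS](@colrestr_supported _ _ e (A i)) ?trmx_mul ?trmxK //.
  apply/colrestr_eq0 => l; rewrite inE mxE.
  by case: (eqVneq l j) => [->|]; rewrite ?jA ?andbF.
pose us i := if i == ord0 then (colrestr e (A i))^T else - (colrestr e (A i))^T.
have /(row_full_inj fullM) :
    \mxrow_i colrestr M (A i) *m \mxcol_i us i = \mxrow_i colrestr M (A i) *m 0.
  rewrite mulmx0 mul_mxrow_mxcol big_ord2 /us /= mulmxN !(colrestr1 M) -!mulmxA.
  by rewrite -!eE // subrr.
move/mxcol_eq0/(_ ord0)/(congr1 trmx); rewrite /us /= trmxK trmx0.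
by move/colrestr_eq0/(_ j jA0)/eqP; rewrite mxE !eqxx oner_eq0.
Qed.

Lemma row_full_mxrow_colrestr1 A : [disjoint A ord0 & A ord_max] ->
  row_full (\mxrow_j colrestr (1%:M : 'M[F]_n) (A j)).
Proof.
move=> disjA; have disjA' : [disjoint A ord_max & A ord0] by rewrite disjoint_sym.
apply/inj_row_full => u; rewrite -[u]submxcolK mul_mxrow_mxcol big_ord2 /= => Eu0.
apply/mxcol_eq0 => i; rewrite -[submxcol u i]mul1mx -(tr_colrestr1_mul_id F (A i)).
case: (ord2P i) => ->.
  move/(congr1 (mulmx (colrestr 1%:M (A ord0))^T)): Eu0.
  by rewrite mulmx0 mulmxDr !mulmxA (tr_colrestr1_mul_disjoint F disjA) mul0mx addr0.
move/(congr1 (mulmx (colrestr 1%:M (A ord_max))^T)): Eu0.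
by rewrite mulmx0 mulmxDr !mulmxA (tr_colrestr1_mul_disjoint F disjA') mul0mx add0r.
Qed.

End FamiliesOfTwo.

Lemma mxvec_index_inj m n (i i' : 'I_m) (j j' : 'I_n) :
  mxvec_index i j = mxvec_index i' j' -> i = i' /\ j = j'.
Proof. by rewrite /mxvec_index => /cast_ord_inj/enum_rank_inj [-> ->]. Qed.

Lemma map_tofrac_unitmx (F : fieldType) N r (Q : 'M[{mpoly F[N]}]_r)
    (v : 'I_N -> F) :
  map_mx (meval v) Q = 1%:M -> map_mx (@FracField.tofrac _) Q \in unitmx.
Proof.
move=> Qv; rewrite unitmxE unitfE det_map_mx tofrac_eq0; apply/eqP => detQ0.
have := det1 F r; rewrite -Qv det_map_mx detQ0 rmorph0 => /eqP.
by rewrite eq_sym oner_eq0.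
Qed.

Section GenericMatrix.
Variables (F : fieldType) (m n : nat).
Local Notation W := (generic_mx F m n).
Implicit Types (T : {set 'I_n}).

Lemma rank_generic_colrestr T : \rank (colrestr W T) = minn m #|T|.
Proof.
apply/eqP; rewrite eqn_leq leq_min rank_leq_row rank_leq_col /=.
(* An r x r submatrix with distinct indeterminates specializes to the identity. *)
set r := minn m #|T|.
pose f : 'I_r -> 'I_m := widen_ord (geq_minl m #|T|).
pose g : 'I_r -> 'I_#|T| := widen_ord (geq_minr m #|T|).
pose diag := [set mxvec_index (f c) (enum_val (g c)) | c : 'I_r].
pose Q : 'M[{mpoly F[m * n]}]_r :=
  \matrix_(a, b) 'X_(mxvec_index (f a) (enum_val (g b))).
have diagE a b : (mxvec_index (f a) (enum_val (g b)) \in diag) = (a == b).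
  apply/imsetP/eqP => [[c _ /mxvec_index_inj [fac /enum_val_inj gbc]] | ->].
    by apply: val_inj; move: fac gbc => /(congr1 val) /= -> /(congr1 val) /= ->.
  by exists b.
have Qdiag : map_mx (meval (fun i => (i \in diag)%:R)) Q = 1%:M.
  by apply/matrixP => a b; rewrite !mxE mevalXU diagE.
have subQ : mxsub f g (colrestr W T) = map_mx (@FracField.tofrac _) Q.
  by apply/matrixP => a b; rewrite !mxE.
have /mxrank_unit rankQ := map_tofrac_unitmx Qdiag; rewrite -subQ in rankQ.
rewrite -[X in (X <= _)%N]rankQ mxsubrc.
apply: leq_trans (mxrankS (rowsub_sub _ _)) _.
by rewrite -[colrestr W T]mulmx1 -mulmx_colsub mulmx1 mxrankM_maxl.
Qed.

Lemma generic_saturated2P (A : 'I_2 -> {set 'I_n}) :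
  saturated A W <-> (m <= #|A ord0 :|: A ord_max|)%N.
Proof.
rewrite saturated2P /row_free rank_generic_colrestr.
by split=> [/eqP/minn_idPl | /minn_idPl ->].
Qed.

Lemma generic_full_col_rank_set0 T :
  (#|T| <= m)%N -> full_col_rank (fam2 T set0) W.
Proof.
move=> le_Tm; apply/full_col_rank_set0.
by rewrite /row_full rank_generic_colrestr (minn_idPr le_Tm).
Qed.

End GenericMatrix.

Section Duality.
Variables (F : fieldType) (k n r : nat) (V : 'M[F]_(k, n)) (H : 'M[F]_(r, n)).
Hypotheses (freeH : row_free H) (defH : (H == kermx V^T)%MS).

Lemma dual_kerP (z : 'cV_n) : reflect (V *m z = 0) (z^T <= H)%MS.
Proof.
rewrite (eqmxP defH); apply: (iffP sub_kermxP) => [|Vz].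
  by rewrite -trmx_mul => /(congr1 trmx); rewrite trmxK trmx0.
by rewrite -trmx_mul Vz trmx0.
Qed.

Lemma dual_vanishing_eq0 S (z : 'cV_n) :
  row_free (colrestr H S) -> V *m z = 0 -> colrestr z^T S = 0 -> z = 0.
Proof.
move=> freeHS /dual_kerP /submxP [x zx] zS.
have x0 : x = 0.
  by apply: (row_free_inj freeHS); rewrite mul0mx -colrestr_mulmx -zx.
by apply: trmx_inj; rewrite zx x0 mul0mx trmx0.
Qed.

Lemma row_free_colrestr_dual T :
  row_full (colrestr V T) -> row_free (colrestr H (~: T)).
Proof.
move=> fullVT; apply/inj_row_free => x; rewrite -colrestr_mulmx.
set y := x *m H => /colrestr_supported yT.
have Vy : V *m y^T = 0 by apply/dual_kerP; rewrite trmxK submxMl.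
have yT0 : colrestr y T = 0.
  apply: trmx_inj; rewrite trmx0; apply: (row_full_inj fullVT).
  by rewrite mulmx0 colrestr1 -mulmxA -[colrestr 1%:M T]trmxK -trmx_mul -yT Vy.
by apply: (row_free_inj freeH); rewrite mul0mx -/y yT yT0 mul0mx.
Qed.

End Duality.

Section CodeDuality.
Variables (F : fieldType) (n k d : nat).
Variables (V : 'M[F]_(k, n)) (H : 'M[F]_(n - k, n)).
Hypotheses (defH : (H == kermx V^T)%MS) (le_kn : (k <= n)%N).

Lemma rMDS_sub_sup : row_free H -> rMDS_sub d 2 V -> rMDS_sup d 2 H.
Proof.
move=> freeH subV A /generic_saturated2P card_S; apply/saturated2P.
set S := A ord0 :|: A ord_max in card_S *.
have card_T : (#|~: S| <= k - d)%N by move: (cardsC S); rewrite card_ord; lia.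
rewrite -[S]setCK; apply: (row_free_colrestr_dual freeH defH).
by apply/full_col_rank_set0/subV/generic_full_col_rank_set0.
Qed.

Hypothesis le_dk : (d <= k)%N.

Lemma rMDS_sup_sub : rMDS_sup d 2 H -> rMDS_sub d 2 V.
Proof.
move=> supH A fullW; have disjA := full_col_rank2_disjoint fullW.
have card_A : (#|A ord0| + #|A ord_max| <= k - d)%N.
  move/full_col_rank2P/eqP: (fullW) => rankW.
  have := rank_leq_row (\mxrow_j colrestr (generic_mx F (k - d) n) (A j)).
  by rewrite rankW big_ord2.
set S := ~: (A ord0 :|: A ord_max).
have freeHS : row_free (colrestr H (S :|: S)).
  apply/(saturated2P _ (fun=> S))/supH/generic_saturated2P; rewrite setUid.
  move: (cardsC (A ord0 :|: A ord_max)) (cardsU (A ord0) (A ord_max)).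
  by rewrite -/S card_ord; lia.
rewrite setUid in freeHS.
set U := \mxrow_j colrestr (1%:M : 'M[F]_n) (A j).
apply/full_col_rank2P; have -> : \mxrow_j colrestr V (A j) = V *m U.
  by rewrite mul_mxrow; apply/eq_mxrowP => j; rewrite colrestr1.
apply/inj_row_full => u VUu.
apply: (row_full_inj (row_full_mxrow_colrestr1 F disjA)); rewrite mulmx0.
apply: (dual_vanishing_eq0 defH freeHS); first by rewrite mulmxA.
rewrite trmx_mul colrestr_mulmx colrestr1 tr_mxrow mxcol_mul.
rewrite (proj2 (mxcol_eq0 _)) ?mulmx0 // => i; rewrite tr_colrestr1_mul_disjoint //.
rewrite disjoints_subset /S setCK.
by case: (ord2P i) => ->; rewrite ?subsetUl ?subsetUr.
Qed.

End CodeDuality.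

Theorem proposition3p6 (F : fieldType) (n k d : nat)
  (V : 'M[F]_(k, n)) (H : 'M[F]_(n - k, n)) :
  row_free V -> row_free H -> (H == kermx V^T)%MS -> (d <= k)%N ->
  (rMDS_sub d 2 V <-> rMDS_sup d 2 H).
Proof.
move=> freeV freeH defH le_dk.
have le_kn : (k <= n)%N by rewrite -(eqP freeV) rank_leq_col.
split; [exact: rMDS_sub_sup defH le_kn freeH | exact: rMDS_sup_sub defH le_kn le_dk].
Qed.
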